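(* Let $k\ge 1$ be an integer and $\sigma$ a permutation of $\mathbb{P}^1(\mathbb{F}_q)$. Let $\mathcal{A}_{\sigma,k}$ be the set of all tuples $(\mu; a_1,\dots,a_k)$ with $a_1,\dots,a_k\in\mathbb{F}_q$ and $\mu\in\mathbb{F}_q(x)$ of degree one such that $$\sigma = \mu(x)\circ x^{q-2}\circ(x-a_k)\circ x^{q-2}\circ(x-a_{k-1})\circ\cdots\circ x^{q-2}\circ(x-a_1),$$ and let $\mathcal{C}_{\sigma,k}$ be the set of all tuples $(\nu; b_1,\dots,b_k)$ with $b_1,\dots,b_k\in\mathbb{F}_q$ and $\nu\in\mathbb{F}_q(x)$ of degree one such that $$\sigma=\nu(x)\circ(b_1,\infty)\circ(b_2,\infty)\circ\cdots\circ(b_k,\infty).$$ Then the map $\mathcal{F}:\mathcal{A}_{\sigma,k}\to\mathcal{C}_{\sigma,k}$, $(\mu;a_1,\dots,a_k)\mapsto(\mu\circ\nu_0;\,F(a_1,\dots,a_k))$ where $\nu_0:=x^{-1}\circ(x-a_k)\circ x^{-1}\circ(x-a_{k-1})\circ\cdots\circ x^{-1}\circ(x-a_1)$, and the map $\mathcal{G}:\mathcal{C}_{\sigma,k}\to\mathcal{A}_{\sigma,k}$, $(\nu;b_1,\dots,b_k)\mapsto(\nu\circ\mu_0;\,a_1,\dots,a_k)$ where $(a_1,\dots,a_k):=G(b_1,\dots,b_k)$ and $\mu_0:=(x+a_1)\circ x^{-1}\circ(x+a_2)\circ x^{-1}\circ\cdots\circ(x+a_k)\circ x^{-1}$, are well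 defined and are mutually inverse bijections. In particular $|\mathcal{A}_{\sigma,k}|=|\mathcal{C}_{\sigma,k}|$.
   Context: Let $q>2$ be a prime power, $\mathbb{F}_q$ the field with $q$ elements, and $\mathbb{P}^1(\mathbb{F}_q)=\mathbb{F}_q\cup\{\infty\}$. A degree-one rational function $\mu(x)=(\alpha x+\beta)/(\gamma x+\delta)\in\mathbb{F}_q(x)$ ($\alpha\delta-\beta\gamma\neq0$) acts as a permutation of $\mathbb{P}^1(\mathbb{F}_q)$ with the usual conventions ($\mu(\infty)=\alpha/\gamma$, or $\infty$ if $\gamma=0$; $\mu(-\delta/\gamma)=\infty$ if $\gamma\ne0$); e.g. $x^{-1}$ swaps $0$ and $\infty$. The monomial $x^{q-2}$ acts on $\mathbb{P}^1(\mathbb{F}_q)$ by fixing $0$ and $\infty$ and sending $c\in\mathbb{F}_q^*$ to $c^{q-2}=c^{-1}$. For $b\in\mathbb{F}_q$, $(b,\infty)$ is the transposition of $\mathbb{P}^1(\mathbb{F}_q)$ swapping $b$ and $\infty$. Composition is $(f\circ g)(x)=f(g(x))$ and all identities are equalities of permutations of $\mathbb{P}^1(\mathbb{F}_q)$. For $c\in\mathbb{F}_q$, $c^{q-2}$ is the field element (so $0^{q-2}=0$). The map $F:\mathbb{F}_q^k\to\mathbb{F}_q^k$ sends $(a_1,\dots,a_k)$ to $(b_1,\dots,b_k)$ where $b_i:=c_{i,i}$, and for each $1\le i\le k$ the elements $c_{i,j}$ ($0\le j\le i$) are defined by $c_{i,0}:=0$ and $c_{i,j}:=c_{i,j-1}^{q-2}+a_{i-j+1}$.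 For $2\le\ell\le k$ let $\Phi_\ell:\mathbb{F}_q^\ell\to\mathbb{F}_q^{\ell-1}$ send $(e_1,\dots,e_\ell)$ to $((e_2-e_1)^{q-2},(e_3-e_1)^{q-2},\dots,(e_\ell-e_1)^{q-2})$. The map $G:\mathbb{F}_q^k\to\mathbb{F}_q^k$ sends $(b_1,\dots,b_k)$ to $(a_1,\dots,a_k)$ where $a_i$ is the first entry of $\Phi_{k-i+2}\circ\Phi_{k-i+3}\circ\cdots\circ\Phi_k(b_1,\dots,b_k)\in\mathbb{F}_q^{k-i+1}$ (for $i=1$ this composite is the identity, so $a_1=b_1$). *)

From HB Require Import structures.
From mathcomp Require Import all_boot all_order all_algebra perm.
Set Implicit Arguments. Unset Strict Implicit. Unset Printing Implicit Defensive.
Import GRing.Theory.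
Local Open Scope ring_scope.

Section Defs.
Variable F : finFieldType.

(* P^1(F_q) = option F, with None = infinity. *)
Definition P1 := option F.

Definition qm2 : nat := (#|F| - 2)%N.

(* A degree-one rational function (a x + b)/(c x + d) in F(x), with
   a d - b c <> 0, represented by its unique normalized coefficient quadruple
   ((a,b),(c,d)): c = 1 if c <> 0, and otherwise d = 1. *)
Definition mob_ok (m : (F * F) * (F * F)) : bool :=
  let a := m.1.1 in let b := m.1.2 in let c := m.2.1 in let d := m.2.2 in
  (a * d - b * c != 0) && (if c != 0 then c == 1 else d == 1).

Definition mob := {m : (F * F) * (F * F) | mob_ok m}.

Lemma mob_id_ok : mob_ok ((1, 0), (0, 1)).
Proof. by rewrite /mob_ok /= mulr1 mulr0 subr0 oner_neq0 eqxx eqxx. Qed.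

Definition mob_id : mob := exist _ ((1, 0), (0, 1)) mob_id_ok.

Definition mob_normalize (m : (F * F) * (F * F)) : (F * F) * (F * F) :=
  let a := m.1.1 in let b := m.1.2 in let c := m.2.1 in let d := m.2.2 in
  if c != 0 then ((a / c, b / c), (1, d / c)) else ((a / d, b / d), (0, 1)).

(* the degree-one function (a x + b)/(c x + d); only used with ad - bc <> 0 *)
Definition mob_of (a b c d : F) : mob := insubd mob_id (mob_normalize ((a, b), (c, d))).

Definition mob_comp (mu nu : mob) : mob :=
  let: ((a, b), (c, d)) := val mu in
  let: ((a', b'), (c', d')) := val nu in
  mob_of (a * a' + b * c') (a * b' + b * d') (c * a' + d * c') (c * b' + d * d').

Definition mob_inv : mob := mob_of 0 1 1 0.
Definition mob_trans (t : F) : mob := mob_of 1 t 0 1.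

Definition mob_act (mu : mob) (x : P1) : P1 :=
  let: ((a, b), (c, d)) := val mu in
  match x with
  | None => if c == 0 then None else Some (a / c)
  | Some e => if c * e + d == 0 then None else Some ((a * e + b) / (c * e + d))
  end.

Definition pw_act (x : P1) : P1 :=
  match x with None => None | Some e => Some (e ^+ qm2) end.
Definition sub_act (t : F) (x : P1) : P1 :=
  match x with None => None | Some e => Some (e - t) end.
Definition swap_act (b : F) (x : P1) : P1 :=
  match x with None => Some b | Some e => if e == b then None else Some e end.

(* x^{q-2} o (x - a_k) o ... o x^{q-2} o (x - a_1) *)
Definition chainA (a : seq F) (x : P1) : P1 :=
  foldl (fun y ai => pw_act (sub_act ai y)) x a.

(* (b_1,inf) o (b_2,inf) o ... o (b_k,inf) *)
Definition chainC (b : seq F) (x : P1) : P1 :=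
  foldr (fun bi y => swap_act bi y) x b.

Definition calA (k : nat) (sigma : {perm P1}) : {set mob * k.-tuple F} :=
  [set p : mob * k.-tuple F | [forall x, sigma x == mob_act p.1 (chainA p.2 x)]].

Definition calC (k : nat) (sigma : {perm P1}) : {set mob * k.-tuple F} :=
  [set p : mob * k.-tuple F | [forall x, sigma x == mob_act p.1 (chainC p.2 x)]].

(* nu_0 = x^{-1} o (x - a_k) o ... o x^{-1} o (x - a_1) *)
Definition nu0 (a : seq F) : mob :=
  foldl (fun m ai => mob_comp mob_inv (mob_comp (mob_trans (- ai)) m)) mob_id a.

(* mu_0 = (x + a_1) o x^{-1} o ... o (x + a_k) o x^{-1} *)
Definition mu0 (a : seq F) : mob :=
  foldr (fun ai m => mob_comp (mob_trans ai) (mob_comp mob_inv m)) mob_id a.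

(* the map F : b_i = c_{i,i}, c_{i,0} = 0, c_{i,j} = c_{i,j-1}^{q-2} + a_{i-j+1};
   here i is 0-based, so the paper's i is i.+1 *)
Definition Fmap (k : nat) (a : k.-tuple F) : k.-tuple F :=
  [tuple foldl (fun c aj => c ^+ qm2 + aj) 0 (rev (take i.+1 a)) | i < k].

Definition Phi (e : seq F) : seq F :=
  [seq (x - head 0 e) ^+ qm2 | x <- behead e].

(* the map G : a_i = first entry of Phi_{k-i+2} o ... o Phi_k (b); 0-based i *)
Definition Gmap (k : nat) (b : k.-tuple F) : k.-tuple F :=
  [tuple head 0 (iter i Phi b) | i < k].

Definition calF (k : nat) (p : mob * k.-tuple F) : mob * k.-tuple F :=
  (mob_comp p.1 (nu0 p.2), Fmap p.2).

Definition calG (k : nat) (p : mob * k.-tuple F) : mob * k.-tuple F :=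
  (mob_comp p.1 (mu0 (Gmap p.2)), Gmap p.2).

End Defs.

Arguments calA {F} k sigma.
Arguments calC {F} k sigma.
Arguments calF {F} k p.
Arguments calG {F} k p.
Arguments Fmap {F} k a.
Arguments Gmap {F} k b.

From HB Require Import structures.
From mathcomp Require Import all_boot all_order all_algebra perm.
From mathcomp Require Import ring finfield.
Set Implicit Arguments. Unset Strict Implicit. Unset Printing Implicit Defensive.
Import GRing.Theory.

(* 1. Degree-one rational functions act on P^1 through homogeneous
      coordinates, so composition of functions corresponds to the product of
      coefficient matrices ([mob_act_comp]); a normalized function is
      determined by its action ([mob_act_inj]).
   2. Since x^{q-2} = x^{-1} on F_q, one step x^{q-2} o (x - t) of the first
      factorisation equals x^{-1} o (x - t) o (t, infinity), and conjugating
      a transposition (b, infinity) through x^{q-2} o (x - t) gives the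
      transposition (b^{q-2} + t, infinity).
   3. Pushing all transpositions to the right yields the factorisation
      chainA a = nu0(a) o chainC (F a) ([chainA_factor]), where the sequence
      F a obeys the recursion F (t :: a) = t :: map (y |-> y^{q-2} + t) (F a).
      The map G obeys the inverse recursion, so F and G are mutually inverse.
   4. nu0(a) and mu0(a) are inverse functions, hence calF and calG are
      mutually inverse maps between calA and calC, and the two sets have the
      same cardinality. *)

Local Open Scope ring_scope.

Lemma card_eq_of_cancel (T : finType) (A B : {set T}) (f g : T -> T) :
  (forall x, x \in A -> f x \in B) -> (forall y, y \in B -> g y \in A) ->
  cancel f g -> cancel g f -> #|A| = #|B|.
Proof.
move=> fAB gBA fK gK; rewrite -(card_imset A (can_inj fK)).
apply: eq_card => y; apply/imsetP/idP => [[x xA ->]|yB]; first exact: fAB.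
by exists (g y); rewrite ?gK ?gBA.
Qed.

Section DegreeOne.
Variable F : finFieldType.

(* A coefficient quadruple ((a, b), (c, d)) stands for (a x + b)/(c x + d). *)
Definition quad := ((F * F) * (F * F))%type.

Definition qact (m : quad) (x : P1 F) : P1 F :=
  let: ((a, b), (c, d)) := m in
  match x with
  | None => if c == 0 then None else Some (a / c)
  | Some e => if c * e + d == 0 then None else Some ((a * e + b) / (c * e + d))
  end.

Definition qdet (m : quad) : F := let: ((a, b), (c, d)) := m in a * d - b * c.

Definition qmul (m n : quad) : quad :=
  let: ((a, b), (c, d)) := m in
  let: ((a', b'), (c', d')) := n in
  ((a * a' + b * c', a * b' + b * d'), (c * a' + d * c', c * b' + d * d')).

Lemma qdet_mul m n : qdet (qmul m n) = qdet m * qdet n.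
Proof. by case: m => [[a b] [c d]]; case: n => [[a' b'] [c' d']] /=; ring. Qed.

Definition hpt (u v : F) : P1 F := if v == 0 then None else Some (u / v).
Definition coords (x : P1 F) : F * F := if x is Some e then (e, 1) else (1, 0).

Lemma qact_coords a b c d x :
  qact ((a, b), (c, d)) x =
  hpt (a * (coords x).1 + b * (coords x).2) (c * (coords x).1 + d * (coords x).2).
Proof. by case: x => [e|] /=; rewrite /hpt ?mulr1 ?mulr0 ?addr0. Qed.

Lemma hpt_scale s u v : s != 0 -> hpt (s * u) (s * v) = hpt u v.
Proof.
move=> sn; rewrite /hpt mulf_eq0 (negbTE sn) /=; case: eqP => // /eqP vn.
by congr Some; field; apply/andP.
Qed.

Lemma hpt_linear a b c d (u v : F) : (u != 0) || (v != 0) ->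
  hpt (a * u + b * v) (c * u + d * v) = qact ((a, b), (c, d)) (hpt u v).
Proof.
move=> uv; rewrite /hpt /=.
have [v0|vn0] := eqVneq v 0.
  rewrite v0 eqxx orbF in uv; rewrite v0 !mulr0 !addr0 mulf_eq0 (negbTE uv) orbF.
  by case: eqP => // /eqP c0; congr Some; field; apply/andP.
have -> : c * (u / v) + d = (c * u + d * v) / v by field.
rewrite mulf_eq0 invr_eq0 (negbTE vn0) orbF.
by case: eqP => // /eqP cn; congr Some; field; apply/andP.
Qed.

Lemma qmap_coords_nz (n : quad) x : qdet n != 0 ->
  let: ((a, b), (c, d)) := n in
  (a * (coords x).1 + b * (coords x).2 != 0) ||
  (c * (coords x).1 + d * (coords x).2 != 0).
Proof.
case: n => [[a b] [c d]] /= dn; apply: contraNT dn; rewrite negb_or !negbK.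
case: x => [e|] /=; rewrite ?mulr1 ?mulr0 ?addr0 => /andP[/eqP h1 /eqP h2]; apply/eqP.
  have -> : b = - (a * e) by apply/eqP; rewrite -addr_eq0 addrC h1.
  have -> : d = - (c * e) by apply/eqP; rewrite -addr_eq0 addrC h2.
  ring.
by rewrite h1 h2; ring.
Qed.

Lemma qact_mul m n x : qdet n != 0 -> qact (qmul m n) x = qact m (qact n x).
Proof.
move=> dn; have := qmap_coords_nz x dn.
case: m => [[a b] [c d]]; case: n dn => [[a' b'] [c' d']] dn nz.
rewrite [qmul _ _]/= [LHS]qact_coords [qact _ x]qact_coords -hpt_linear //.
by congr hpt; ring.
Qed.

Lemma normalize_scale (a b c d : F) : a * d - b * c != 0 ->
  exists2 s : F, s != 0 &
    mob_normalize ((a, b), (c, d)) = ((s * a, s * b), (s * c, s * d)).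
Proof.
move=> dn; rewrite /mob_normalize /=; case: ifP => [cn|/negbFE/eqP c0].
  by exists c^-1; rewrite ?invr_eq0 // mulVf // ![_ / c]mulrC.
have dn0 : d != 0 by apply: contraNneq dn => ->; rewrite c0 !mulr0 subrr.
by exists d^-1; rewrite ?invr_eq0 // c0 mulr0 mulVf // ![_ / d]mulrC.
Qed.

Lemma mob_of_act a b c d x : a * d - b * c != 0 ->
  mob_act (mob_of a b c d) x = qact ((a, b), (c, d)) x.
Proof.
move=> dn; have [s sn eqN] := normalize_scale dn.
have ok : mob_ok (mob_normalize ((a, b), (c, d))).
  apply/andP; split; last first.
    by rewrite /mob_normalize /=; case: (c != 0); rewrite /= ?oner_neq0 ?eqxx.
  rewrite eqN /=.
  have -> : s * a * (s * d) - s * b * (s * c) = s * s * (a * d - b * c) by ring.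
  by rewrite !mulf_neq0.
rewrite /mob_of -[LHS]/(qact _ x) val_insubd ok eqN.
rewrite !qact_coords -[in RHS](hpt_scale _ _ sn); congr hpt; ring.
Qed.

Lemma qdet_mob (m : mob F) : qdet (val m) != 0.
Proof. by case: m => [[[a b] [c d]]] /= /andP[]. Qed.

Lemma mob_act_comp (m n : mob F) x :
  mob_act (mob_comp m n) x = mob_act m (mob_act n x).
Proof.
rewrite -[mob_act m _]/(qact _ _) -[mob_act n _]/(qact _ _) -qact_mul ?qdet_mob //.
have := qdet_mul (val m) (val n); have := qdet_mob m; have := qdet_mob n.
case: m => [[[a b] [c d]] okm]; case: n => [[[a' b'] [c' d']] okn] /= dn dm dp.
by apply: mob_of_act; move: dp => /= ->; rewrite mulf_neq0.
Qed.

(* an affine map x |-> a x + b is determined by its values at 0 and 1 *)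
Lemma affine_act_inj a b a' b' :
  (forall x, qact ((a, b), (0, 1)) x = qact ((a', b'), (0, 1)) x) -> a = a' /\ b = b'.
Proof.
move=> H; have := H (Some 0); have := H (Some 1).
rewrite /= !mul0r !add0r oner_eq0 !divr1 !mulr0 !add0r !mulr1 => -[e1] [e2].
by split=> //; apply: (addIr b); rewrite e1 e2.
Qed.

(* (a x + b)/(x + d) is determined by its values at infinity, at its pole
   -d, and at 1 - d *)
Lemma frac_act_inj a b d a' b' d' :
  (forall x, qact ((a, b), (1, d)) x = qact ((a', b'), (1, d')) x) ->
  [/\ a = a', b = b' & d = d'].
Proof.
move=> H; have := H None; rewrite /= oner_eq0 !divr1 => -[ea]; subst a'.
have ed : d' = d.
  have := H (Some (- d)); rewrite /= mul1r addNr eqxx.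
  by case: eqP => // /eqP; rewrite addrC subr_eq0 => /eqP.
subst d'; have := H (Some (1 - d)).
by rewrite /= !mul1r subrK oner_eq0 !divr1 => -[/addrI ->].
Qed.

Lemma mob_act_inj (m n : mob F) : (forall x, mob_act m x = mob_act n x) -> m = n.
Proof.
case: m => [[[a b] [c d]] okm]; case: n => [[[a' b'] [c' d']] okn].
rewrite /mob_act /= => H; apply: val_inj => /=.
move: okm okn => /andP[_ /= Hm] /andP[_ /= Hn]; have := H None => /=.
have [c0|cn] := eqVneq c 0; have [c0'|cn'] := eqVneq c' 0 => //= H0.
  subst c c'; move: Hm Hn; rewrite eqxx /= => /eqP d1 /eqP d1'; subst d d'.
  by have [-> ->] := affine_act_inj H.
move: Hm Hn; rewrite cn cn' => /eqP c1 /eqP c1'; subst c c'.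
by have [-> -> ->] := frac_act_inj H.
Qed.

Definition inv_act (x : P1 F) : P1 F :=
  match x with None => Some 0 | Some e => if e == 0 then None else Some e^-1 end.
Definition shift_act (t : F) (x : P1 F) : P1 F :=
  match x with None => None | Some e => Some (e + t) end.

Lemma mob_inv_act x : mob_act (mob_inv F) x = inv_act x.
Proof.
rewrite mob_of_act; last by rewrite mul0r sub0r mulr1 oppr_eq0 oner_eq0.
case: x => [e|] /=; last by rewrite oner_eq0 mul0r.
by rewrite mul1r addr0 mul0r add0r div1r.
Qed.

Lemma mob_trans_act t x : mob_act (mob_trans t) x = shift_act t x.
Proof.
rewrite mob_of_act; last by rewrite mulr1 mulr0 subr0 oner_eq0.
case: x => [e|] /=; last by rewrite eqxx.
by rewrite mul0r add0r oner_eq0 mul1r divr1.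
Qed.

Lemma mob_id_act x : mob_act (mob_id F) x = x.
Proof.
rewrite /mob_act /=; case: x => [e|]; last by rewrite eqxx.
by rewrite mul0r add0r oner_eq0 mul1r addr0 divr1.
Qed.

Lemma inv_actK : involutive inv_act.
Proof.
case=> [e|] /=; last by rewrite eqxx.
by have [->|en] := eqVneq e 0; rewrite //= invr_eq0 (negbTE en) invrK.
Qed.

Lemma shift_actK t : cancel (shift_act t) (shift_act (- t)).
Proof. by case=> [e|] //=; rewrite addrK. Qed.

Lemma shift_actNK t : cancel (shift_act (- t)) (shift_act t).
Proof. by case=> [e|] //=; rewrite subrK. Qed.

Definition nu0_act (a : seq F) (x : P1 F) : P1 F :=
  foldl (fun y ai => inv_act (shift_act (- ai) y)) x a.
Definition mu0_act (a : seq F) (x : P1 F) : P1 F :=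
  foldr (fun ai y => shift_act ai (inv_act y)) x a.

Lemma nu0E a x : mob_act (nu0 a) x = nu0_act a x.
Proof.
rewrite /nu0 -[x in RHS]mob_id_act; elim: a (mob_id F) x => [|t a IH] m x //=.
by rewrite IH mob_act_comp mob_inv_act mob_act_comp mob_trans_act.
Qed.

Lemma mu0E a x : mob_act (mu0 a) x = mu0_act a x.
Proof.
elim: a => [|t a IH]; first exact: mob_id_act.
by rewrite /= mob_act_comp mob_trans_act mob_act_comp mob_inv_act IH.
Qed.

Lemma mu0_actK a : cancel (mu0_act a) (nu0_act a).
Proof. by elim: a => [|t a IH] x //=; rewrite shift_actK inv_actK IH. Qed.

Lemma nu0_actK a : cancel (nu0_act a) (mu0_act a).
Proof. by elim: a => [|t a IH] x //=; rewrite IH inv_actK shift_actNK. Qed.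

End DegreeOne.

Section Factorisations.
Variable F : finFieldType.
Hypothesis hq : (2 < #|F|)%N.

(* on F_q, the monomial x^{q-2} is the field inverse (with 0^{-1} = 0) *)
Lemma pow_qm2 (x : F) : x ^+ qm2 F = x^-1.
Proof.
have [->|xn] := eqVneq x 0.
  by rewrite invr0 expr0n /qm2 subn_eq0 leqNgt hq.
apply: (mulIf xn); rewrite mulVf //; apply: (mulIf xn).
rewrite -!exprSr mul1r /qm2.
have -> : (#|F| - 2).+2 = #|F| by rewrite -addn2 subnK // ltnW.
exact: expf_card.
Qed.

Lemma pw_sub_split (t : F) (x : P1 F) :
  pw_act (sub_act t x) = inv_act (shift_act (- t) (swap_act t x)).
Proof.
case: x => [e|] /=; last by rewrite addrN eqxx.
have [->|en] := eqVneq e t; first by rewrite /= subrr pow_qm2 invr0.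
by rewrite /= pow_qm2 subr_eq0 (negbTE en).
Qed.

(* the map y |-> y^{q-2} + t, which governs how transpositions move *)
Definition step (t y : F) : F := y ^+ qm2 F + t.

Lemma swap_conj (b t : F) (x : P1 F) :
  swap_act b (pw_act (sub_act t x)) = pw_act (sub_act t (swap_act (step t b) x)).
Proof.
rewrite /step !pow_qm2; case: x => [e|] /=; last by rewrite pow_qm2 addrK invrK.
rewrite pow_qm2 -(inj_eq invr_inj) invrK -subr_eq.
by case: eqP => //= _; rewrite pow_qm2.
Qed.

Lemma chainC_conj (t : F) s (y : P1 F) :
  chainC s (pw_act (sub_act t y)) = pw_act (sub_act t (chainC (map (step t) s) y)).
Proof. by elim: s => [|b s IH] //=; rewrite IH swap_conj. Qed.

Definition Fseq (a : seq F) : seq F :=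
  [seq foldl (fun c aj => c ^+ qm2 F + aj) 0 (rev (take i.+1 a)) | i <- iota 0 (size a)].

Definition Gseq (b : seq F) : seq F :=
  [seq head 0 (iter i (@Phi F) b) | i <- iota 0 (size b)].

Lemma Fseq_cons t a : Fseq (t :: a) = t :: map (step t) (Fseq a).
Proof.
rewrite /Fseq /= take0 /= pow_qm2 invr0 add0r; congr (_ :: _).
rewrite (iotaDl 1 0) -!map_comp; apply: eq_map => i /=.
by rewrite rev_cons foldl_rcons.
Qed.

Lemma Gseq_cons b0 bs : Gseq (b0 :: bs) = b0 :: Gseq (Phi (b0 :: bs)).
Proof.
rewrite /Gseq /= size_map; congr (_ :: _).
rewrite (iotaDl 1 0) -!map_comp; apply: eq_map => i /=.
by rewrite -iterSr.
Qed.

Lemma Phi_step t s : Phi (t :: map (step t) s) = s.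
Proof.
rewrite /Phi /= -map_comp -[RHS]map_id; apply: eq_map => y /=.
by rewrite /step addrK !pow_qm2 invrK.
Qed.

Lemma step_Phi b0 bs : map (step b0) (Phi (b0 :: bs)) = bs.
Proof.
rewrite /Phi /= -map_comp -[RHS]map_id; apply: eq_map => y /=.
by rewrite /step !pow_qm2 invrK subrK.
Qed.

Lemma FseqK : cancel Fseq Gseq.
Proof. by elim=> [|t a IH] //; rewrite Fseq_cons Gseq_cons Phi_step IH. Qed.

Lemma GseqK : cancel Gseq Fseq.
Proof.
move=> b; elim: {b}(size b) {-2}b (erefl (size b)) => [|n IH] [|b0 bs] //= [sz].
by rewrite Gseq_cons Fseq_cons IH ?step_Phi // size_map.
Qed.

Lemma chainA_factor a x : chainA a x = nu0_act a (chainC (Fseq a) x).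
Proof.
elim: a x => [|t a IH] x //.
by rewrite [LHS]/= IH Fseq_cons [RHS]/= -pw_sub_split chainC_conj.
Qed.

Lemma FmapE k (a : k.-tuple F) : tval (Fmap k a) = Fseq a.
Proof. by rewrite /Fmap /= /Fseq size_tuple -val_enum_ord -map_comp. Qed.

Lemma GmapE k (b : k.-tuple F) : tval (Gmap k b) = Gseq b.
Proof. by rewrite /Gmap /= /Gseq size_tuple -val_enum_ord -map_comp. Qed.

Lemma FmapK k : cancel (@Fmap F k) (Gmap k).
Proof. by move=> a; apply: val_inj; rewrite /= -[RHS]FseqK -FmapE -GmapE. Qed.

Lemma GmapK k : cancel (@Gmap F k) (Fmap k).
Proof. by move=> b; apply: val_inj; rewrite /= -[RHS]GseqK -GmapE -FmapE. Qed.

Lemma calFK k : cancel (@calF F k) (calG k).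
Proof.
case=> m a; change ((mob_comp (mob_comp m (nu0 a)) (mu0 (Gmap k (Fmap k a))),
                      Gmap k (Fmap k a)) = (m, a)).
rewrite FmapK; congr pair.
by apply: mob_act_inj => x; rewrite !mob_act_comp mu0E nu0E mu0_actK.
Qed.

Lemma calGK k : cancel (@calG F k) (calF k).
Proof.
case=> m b; change ((mob_comp (mob_comp m (mu0 (Gmap k b))) (nu0 (Gmap k b)),
                      Fmap k (Gmap k b)) = (m, b)).
rewrite GmapK; congr pair.
by apply: mob_act_inj => x; rewrite !mob_act_comp nu0E mu0E nu0_actK.
Qed.

Lemma calF_in k (sigma : {perm P1 F}) p :
  p \in calA k sigma -> calF k p \in calC k sigma.
Proof.
case: p => m a; rewrite !inE => /forallP H; apply/forallP => x /=.
by rewrite mob_act_comp nu0E FmapE -chainA_factor; apply: H.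
Qed.

Lemma calG_in k (sigma : {perm P1 F}) p :
  p \in calC k sigma -> calG k p \in calA k sigma.
Proof.
case: p => m b; rewrite !inE => /forallP H; apply/forallP => x /=.
by rewrite mob_act_comp mu0E chainA_factor GmapE GseqK nu0_actK; apply: H.
Qed.

End Factorisations.

Local Close Scope ring_scope.

Theorem theorem1 (F : finFieldType) (hq : 2 < #|F|) (k : nat) (hk : 1 <= k)
    (sigma : {perm P1 F}) :
  (forall p, p \in calA k sigma -> calF k p \in calC k sigma) /\
  (forall p, p \in calC k sigma -> calG k p \in calA k sigma) /\
  {in calA k sigma, cancel (calF k) (calG k)} /\
  {in calC k sigma, cancel (calG k) (calF k)} /\
  #|calA k sigma| = #|calC k sigma|.
Proof.
have AtoC := @calF_in F hq k sigma.
have CtoA := @calG_in F hq k sigma.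
split; first exact: AtoC.
split; first exact: CtoA.
split; first by move=> p _; apply: (calFK hq).
split; first by move=> p _; apply: (calGK hq).
apply: (card_eq_of_cancel AtoC CtoA).
- by move=> p; apply: (calFK hq).
- by move=> p; apply: (calGK hq).
Qed.
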